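(* If $\Phi\in\mathcal F\otimes_{\mathbb C}\mathbb C(t_1,t_2)$ (depending on $q$) is a solution of $q\frac{d}{dq}\Phi=\mathsf M_D\Phi$, then $\Theta\Phi_z$ is a solution of $zq\frac{d}{dq}\Phi=\mathsf M_D\Phi$, where $\Phi_z=\Phi(t_1/z,t_2/z,q)$ and $\Theta|\mu\rangle=z^{\ell(\mu)}|\mu\rangle$.
   Context: $\mathcal F$ is the Fock space generated by commuting creation operators $\alpha_{-k}$ ($k>0$) on a vacuum $v_\emptyset$, with annihilators $\alpha_k$, $\alpha_kv_\emptyset=0$, $[\alpha_k,\alpha_l]=k\delta_{k+l,0}$, and basis $|\mu\rangle=\frac1{\mathfrak z(\mu)}\prod_i\alpha_{-\mu_i}v_\emptyset$ indexed by partitions, $\ell(\mu)$ the length. With $|\cdot|=\sum_{k>0}\alpha_{-k}\alpha_k$, $$\mathsf M_D=\mathsf M_D(q;t_1,t_2)=(t_1+t_2)\sum_{k>0}\frac k2\frac{(-q)^k+1}{(-q)^k-1}\alpha_{-k}\alpha_k-\frac{t_1+t_2}{2}\frac{(-q)+1}{(-q)-1}|\cdot|+\frac12\sum_{k,l>0}\big[t_1t_2\alpha_{k+l}\alpha_{-k}\alpha_{-l}-\alpha_{-k-l}\alpha_k\alpha_l\big].$$ *)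

From HB Require Import structures.
From mathcomp Require Import all_boot all_order all_algebra.
From mathcomp Require Import all_classical all_reals all_analysis.
From mathcomp Require Import complex.
Set Implicit Arguments. Unset Strict Implicit. Unset Printing Implicit Defensive.
Import Order.TTheory GRing.Theory Num.Theory.
Import numFieldNormedType.Exports.
Local Open Scope ring_scope.

Definition is_partition (mu : seq nat) : bool :=
  sorted geq mu && all (fun x => 0 < x)%N mu.

Definition padd (k : nat) (mu : seq nat) : seq nat := sort geq (k :: mu).

Section Fock.
Variable C : numFieldType.

(* A vector of the Fock space F (with coefficients in C) is encoded by its
   coordinate function in the monomial basis p_mu = prod_i alpha_{-mu_i} v_empty
   (= z(mu) |mu>); only the values at partitions are meaningful. *)
Definition fock := seq nat -> C.

(* creation alpha_{-k} : p_nu |-> p_{nu + k} *)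
Definition acr (k : nat) (v : fock) : fock :=
  fun mu => if k \in mu then v (rem k mu) else 0.

(* annihilation alpha_k (k > 0) : p_nu |-> k m_k(nu) p_{nu - k} *)
Definition aan (k : nat) (v : fock) : fock :=
  fun mu => (k * (count_mem k mu).+1)%:R * v (padd k mu).

(* the energy operator |.| = sum_{k>0} alpha_{-k} alpha_k *)
Definition energy (v : fock) : fock := fun mu => (sumn mu)%:R * v mu.

Definition cq (q : C) (k : nat) : C := ((- q) ^+ k + 1) / ((- q) ^+ k - 1).

(* M_D(q; t1, t2).  All the sums over k, l > 0 are finite on each coordinate:
   the terms with k > |mu| or l > |mu| vanish at mu, so truncating at |mu| is exact. *)
Definition MD (q t1 t2 : C) (v : fock) : fock := fun mu =>
  let N := sumn mu in
  (t1 + t2) * (\sum_(1 <= k < N.+1) (k%:R / 2) * cq q k * acr k (aan k v) mu)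
  - (t1 + t2) / 2 * cq q 1 * energy v mu
  + 1 / 2 * (\sum_(1 <= k < N.+1) \sum_(1 <= l < N.+1)
       (t1 * t2 * aan (k + l) (acr k (acr l v)) mu
        - acr (k + l) (aan k (aan l v)) mu)).

Definition Theta (z : C) (v : fock) : fock := fun mu => z ^+ size mu * v mu.

End Fock.

From HB Require Import structures.
From mathcomp Require Import all_boot all_order all_algebra.
From mathcomp Require Import all_classical all_reals all_analysis.
From mathcomp Require Import complex.
From mathcomp Require Import ring.
Import Order.TTheory GRing.Theory Num.Theory.
Import numFieldNormedType.Exports.
Local Open Scope ring_scope.
Local Open Scope complex_scope.

(* The diagonal terms of
   M_D preserve lengths, the cut term alpha_{k+l} alpha_{-k} alpha_{-l} raises
   them by one and the join term alpha_{-k-l} alpha_k alpha_l lowers them by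
   one, so conjugating by Theta scales these three parts by 1, z^-1 and z.
   Replacing t_i by z t_i scales the diagonal part by z and the cut part by
   z^2, hence M_D(q; z t1, z t2) Theta = z Theta M_D(q; t1, t2).  As Theta does
   not depend on q, applying Theta to q Phi' = M_D Phi gives the claim. *)

Lemma size_padd (k : nat) (mu : seq nat) : size (padd k mu) = (size mu).+1.
Proof. by rewrite /padd size_sort. Qed.

Lemma size_rem_pos {k : nat} {mu : seq nat} :
  k \in mu -> size (rem k mu) = (size mu).-1 /\ (0 < size mu)%N.
Proof. by move=> kmu; rewrite size_rem //; case: mu kmu. Qed.

Section ThetaConjugation.
Variables (C : numFieldType) (z : C).

Lemma acr_aan_Theta (k : nat) (v : fock C) (mu : seq nat) :
  acr k (aan k (Theta z v)) mu = Theta z (acr k (aan k v)) mu.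
Proof.
rewrite /acr /aan /Theta; case: ifP => kmu; last by rewrite mulr0.
have [size_rem_k mu_gt0] := size_rem_pos kmu.
by rewrite size_padd size_rem_k prednK // mulrCA.
Qed.

Lemma energy_Theta (v : fock C) (mu : seq nat) :
  energy (Theta z v) mu = Theta z (energy v) mu.
Proof. by rewrite /energy /Theta mulrCA. Qed.

Lemma cut_Theta (k l : nat) (v : fock C) (mu : seq nat) :
  z * aan (k + l) (acr k (acr l (Theta z v))) mu
  = Theta z (aan (k + l) (acr k (acr l v))) mu.
Proof.
rewrite /acr /aan /Theta; case: ifP => kmu; last by rewrite !mulr0.
case: ifP => lmu; last by rewrite !mulr0.
have [size_rem_l nu_gt0] := size_rem_pos lmu.
have [size_rem_k _] := size_rem_pos kmu.
rewrite size_rem_k size_padd /= in nu_gt0.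
rewrite size_rem_l size_rem_k size_padd /=.
by case: (size mu) nu_gt0 => [//|n] _; rewrite exprS; ring.
Qed.

Lemma join_Theta (k l : nat) (v : fock C) (mu : seq nat) :
  acr (k + l) (aan k (aan l (Theta z v))) mu
  = z * Theta z (acr (k + l) (aan k (aan l v))) mu.
Proof.
rewrite /acr /aan /Theta; case: ifP => kmu; last by rewrite !mulr0.
have [size_rem_kl mu_gt0] := size_rem_pos kmu.
by rewrite !size_padd size_rem_kl prednK // exprS; ring.
Qed.

Lemma MD_Theta (q t1 t2 : C) (v : fock C) (mu : seq nat) :
  MD q (t1 * z) (t2 * z) (Theta z v) mu = z * Theta z (MD q t1 t2 v) mu.
Proof.
have cut_join_Theta k l : t1 * z * (t2 * z) * aan (k + l) (acr k (acr l (Theta z v))) mu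
      - acr (k + l) (aan k (aan l (Theta z v))) mu
    = z * z ^+ size mu * (t1 * t2 * aan (k + l) (acr k (acr l v)) mu
                          - acr (k + l) (aan k (aan l v)) mu).
  have -> : forall J : C, t1 * z * (t2 * z) * J = t1 * t2 * (z * (z * J)).
    by move=> J; ring.
  by rewrite join_Theta cut_Theta /Theta; ring.
rewrite /MD.
under eq_bigr => k _ do rewrite acr_aan_Theta /Theta mulrCA.
under [X in 1 / 2 * X]eq_bigr => k _ do
  rewrite (eq_bigr _ (fun l _ => cut_join_Theta k l)) -mulr_sumr.
rewrite -2!mulr_sumr energy_Theta /Theta.
set diag := \sum_(1 <= k < _) _ * _.
set cut_join := \sum_(1 <= k < _) \sum_(1 <= l < _) _.
ring.
Qed.

End ThetaConjugation.

Theorem proposition1 (R : realType)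
  (Phi : R[i] -> R[i] -> R[i] -> fock R[i])
  (D : R[i] -> R[i] -> R[i] -> Prop) (z : R[i]) :
  z != 0 ->
  (forall t1 t2 q, D t1 t2 q ->
     exists N : nat, forall mu, is_partition mu -> (N < sumn mu)%N ->
       Phi t1 t2 q mu = 0) ->
  (forall t1 t2 q mu, D t1 t2 q -> is_partition mu ->
     derivable (fun s : R[i]^o => (Phi t1 t2 s mu : R[i]^o)) q 1 /\
     q * 'D_1 (fun s : R[i]^o => (Phi t1 t2 s mu : R[i]^o)) q = MD q t1 t2 (Phi t1 t2 q) mu) ->
  let Psi := fun t1 t2 q => Theta z (Phi (t1 / z) (t2 / z) q) in
  forall t1 t2 q mu, D (t1 / z) (t2 / z) q -> is_partition mu ->
     derivable (fun s : R[i]^o => (Psi t1 t2 s mu : R[i]^o)) q 1 /\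
     z * q * 'D_1 (fun s : R[i]^o => (Psi t1 t2 s mu : R[i]^o)) q = MD q t1 t2 (Psi t1 t2 q) mu.
Proof.
move=> z_neq0 _ Phi_eq Psi t1 t2 q mu Dq mu_part.
have [Phi_der Phi_ode] := Phi_eq _ _ _ mu Dq mu_part.
have -> : (fun s : R[i]^o => (Psi t1 t2 s mu : R[i]^o))
          = z ^+ size mu *: (fun s : R[i]^o => (Phi (t1 / z) (t2 / z) s mu : R[i]^o)).
  by apply: funext.
split; first exact: derivableZ.
have -> : MD q t1 t2 (Psi t1 t2 q) mu
          = MD q (t1 / z * z) (t2 / z * z) (Theta z (Phi (t1 / z) (t2 / z) q)) mu.
  by rewrite !divfK.
rewrite deriveZ // MD_Theta /Theta -Phi_ode -[_ *: _]/(_ * _); ring.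
Qed.
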